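(* Let $p\ge 1$ be an integer, $t\ge 2$, let $n_1,\dots,n_t$ be positive integers, and let $G=K_{n_1,\dots,n_t}$ be the complete $t$-partite graph with partite sets $V_1,\dots,V_t$, $|V_i|=n_i$. Let $N_t=\{1,\dots,t\}$ and $f(I)=\sum_{i\in I}n_i$ for $I\subseteq N_t$, and assume $f(N_t)>p$. Then $$\gamma_p(G)=\min\{s_1,\ p+s_2\}.$$
   Context: A set $S\subseteq V(G)$ is a $p$-dominating set of $G$ if every vertex $v\in V(G)\setminus S$ has at least $p$ neighbors in $S$; $\gamma_p(G)$ is the minimum cardinality of a $p$-dominating set of $G$. Define $s_1=\min\{f(I): I\subseteq N_t,\ f(I)\ge p\}$. Define the family $$\mathscr{I}_p=\Big\{I\subset N_t:\ |I|\le t-2,\ f(I)<p,\ \text{and } \Big\lceil\tfrac{p-f(I)}{t-|I|-1}\Big\rceil\le n_i \text{ for each } i\in N_t\setminus I\Big\},$$ and $s_2=\min\{\lceil\frac{p-f(I)}{t-|I|-1}\rceil: I\in\mathscr{I}_p\}$ if $\mathscr{I}_p\ne\emptyset$, and $s_2=\infty$ if $\mathscr{I}_p=\emptyset$. *)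

From mathcomp Require Import all_boot.
Set Implicit Arguments. Unset Strict Implicit. Unset Printing Implicit Defensive.

(* Complete t-partite graph on a finite vertex type V: [part v] is the index
   of the partite set containing v; two vertices are adjacent iff they lie in
   different partite sets. *)
Definition cmp_adj (V : finType) (t : nat) (part : V -> 'I_t) : rel V :=
  fun x y => part x != part y.

Definition p_dominating (V : finType) (e : rel V) (p : nat) (S : {set V}) : bool :=
  [forall v, (v \notin S) ==> (p <= #|[set u in S | e v u]|)].

(* gamma_p: minimum cardinality of a p-dominating set (V itself is one). *)
Definition gamma_p (V : finType) (e : rel V) (p : nat) : nat :=
  \big[minn/#|V|]_(S : {set V} | p_dominating e p S) #|S|.

Definition fsum (t : nat) (n : 'I_t -> nat) (I : {set 'I_t}) : nat :=
  \sum_(i in I) n i.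

Definition ceildiv (a b : nat) : nat := (a + b.-1) %/ b.

Definition s1 (t : nat) (n : 'I_t -> nat) (p : nat) : nat :=
  \big[minn/fsum n setT]_(I : {set 'I_t} | p <= fsum n I) fsum n I.

Definition s2_val (t : nat) (n : 'I_t -> nat) (p : nat) (I : {set 'I_t}) : nat :=
  ceildiv (p - fsum n I) (t - #|I| - 1).

Definition in_Ip (t : nat) (n : 'I_t -> nat) (p : nat) (I : {set 'I_t}) : bool :=
  [&& I \proper setT, #|I| <= t - 2, fsum n I < p &
      [forall i, (i \notin I) ==> (s2_val n p I <= n i)]].

(* s2 when \mathscr{I}_p is nonempty (the default p is never used then) *)
Definition s2 (t : nat) (n : 'I_t -> nat) (p : nat) : nat :=
  \big[minn/p]_(I : {set 'I_t} | in_Ip n p I) s2_val n p I.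

(* min{s1, p + s2}, with s2 = infinity when \mathscr{I}_p is empty *)
Definition gamma_formula (t : nat) (n : 'I_t -> nat) (p : nat) : nat :=
  if [exists I, in_Ip n p I] then minn (s1 n p) (p + s2 n p) else s1 n p.

From mathcomp Require Import all_boot all_order zify.
Set Implicit Arguments. Unset Strict Implicit. Unset Printing Implicit Defensive.
Import Order.TTheory.

(* A vertex set S of the complete multipartite graph matters only through its
   profile a_i = |S :&: V_i|: a vertex of a part that S does not fill sees the
   |S| - a_i chosen vertices of the other parts, so S is p-dominating iff
   p + a_i <= |S| for every non-full part i.  The values f(I) and p + s_2 are
   the sizes of two explicit profiles: fill the parts in I, and additionally
   put p + s_2 - f(I) vertices into the remaining parts, at most s_2 in each.  Conversely, as long as some non-full part j has n_j + p <= |S|,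
   mass can be moved from the other non-full parts to fill j without changing
   |S|.  When this stops, the set I of full parts satisfies f(I) >= p, or
   every non-full part carries at most m = |S| - p vertices and has more than
   m vertices; then |S| = p + m <= f(I) + (t - |I|) m puts I in I_p with
   s_2 <= m. *)

Lemma ceildiv_leq x d m : 0 < d -> x <= d * m -> ceildiv x d <= m.
Proof. by move=> d_gt0 le_x; rewrite /ceildiv -ltnS ltn_divLR // mulSn mulnC; lia. Qed.

Lemma leq_mul_ceildiv x d : 0 < d -> x <= d * ceildiv x d.
Proof.
by move=> d_gt0; rewrite /ceildiv; have := ltn_ceil (x + d.-1) d_gt0; rewrite mulSn mulnC; lia.
Qed.

Lemma sum_setC (T : finType) (A : {set T}) (F : T -> nat) :
  \sum_i F i = \sum_(i in A) F i + \sum_(i in ~: A) F i.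
Proof. by rewrite (bigID [in A]); congr (_ + _); apply: eq_bigl => i; rewrite in_setC. Qed.

Lemma exists_subset_card (T : finType) (B : {set T}) k :
  k <= #|B| -> exists2 A : {set T}, A \subset B & #|A| = k.
Proof.
rewrite -bin_gt0 -cards_draws => /card_gt0P [A].
by rewrite inE => /andP [sAB /eqP cardA]; exists A.
Qed.

Lemma sum_decrease_on (T : finType) (A : {set T}) (u : T -> nat) d :
  d <= \sum_(i in A) u i ->
  exists b : T -> nat,
    [/\ forall i, b i <= u i, {in ~: A, b =1 u} & \sum_i b i + d = \sum_i u i].
Proof.
move=> le_dA; suff [b [le_bu eq_bu sum_b]] : exists b : T -> nat,
    [/\ forall i, b i <= u i, {in ~: A, b =1 u}
       & \sum_(i in A) b i + d = \sum_(i in A) u i].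
  exists b; split => //; rewrite (sum_setC A b) (sum_setC A u) -sum_b.
  by rewrite (eq_bigr u eq_bu) addnAC.
elim: d le_dA => [|d IHd] le_dA; first by exists u; split; rewrite ?addn0.
have [b [le_bu eq_bu sum_b]] := IHd (ltnW le_dA).
have [i Ai b_gt0] : exists2 i, i \in A & 0 < b i.
  apply/exists_inP; apply: contraLR le_dA => /exists_inPn b0.
  rewrite -ltnNge ltnS -sum_b big1 // => i /b0.
  by rewrite lt0n negbK => /eqP.
pose b' k := if k == i then (b i).-1 else b k.
exists b'; split.
- by move=> k; rewrite /b'; case: eqP => [->|_]; rewrite ?(leq_trans (leq_pred _)).
- move=> k Ak; rewrite /b'; case: eqP => [eq_ki|_]; last exact: eq_bu.
  by move: Ak; rewrite eq_ki inE Ai.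
- rewrite -sum_b (big_setD1 i Ai) (big_setD1 i Ai) /b' eqxx /=.
  rewrite (eq_bigr b) => [|k /setD1P [/negPf -> _] //]; lia.
Qed.

Section Profiles.
Variables (t : nat) (n : 'I_t -> nat) (p : nat).

Definition dom_profile (a : 'I_t -> nat) : Prop :=
  (forall i, a i <= n i) /\ (forall i, a i < n i -> p + a i <= \sum_j a j).

Definition full_parts (a : 'I_t -> nat) : {set 'I_t} := [set i | n i <= a i].

Lemma sum_full_parts a : (forall i, a i <= n i) ->
  \sum_(i in full_parts a) a i = fsum n (full_parts a).
Proof.
move=> le_an; apply: eq_bigr => i; rewrite inE => le_na.
by apply/eqP; rewrite eqn_leq le_an.
Qed.

Lemma dom_profile_fsum I : p <= fsum n I ->
  exists2 a, dom_profile a & \sum_i a i = fsum n I.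
Proof.
move=> le_pI; pose a i := if i \in I then n i else 0.
have sum_a : \sum_i a i = fsum n I.
  rewrite (sum_setC I) [X in _ + X]big1 => [|i]; last by rewrite inE /a => /negPf ->.
  by rewrite addn0; apply: eq_bigr => i; rewrite /a => ->.
exists a => //; split => i; rewrite /a; case: ifP => // _; first by rewrite ltnn.
by rewrite sum_a addn0.
Qed.

Lemma in_Ip_denom_gt0 I : 1 < t -> in_Ip n p I -> 0 < t - #|I| - 1.
Proof. by move=> t_gt1 /and4P [_ le_It2 _ _]; lia. Qed.

Lemma s2_val_le I : 1 < t -> in_Ip n p I -> s2_val n p I <= p.
Proof.
move=> t_gt1 IpI; rewrite /s2_val; apply: leq_trans (leq_subr (fsum n I) p).
by apply: ceildiv_leq (in_Ip_denom_gt0 t_gt1 IpI) _; rewrite leq_pmull // in_Ip_denom_gt0.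
Qed.

Lemma dom_profile_s2_val I : 1 < t -> in_Ip n p I ->
  exists2 a, dom_profile a & \sum_i a i = p + s2_val n p I.
Proof.
move=> t_gt1 IpI; have d_gt0 := in_Ip_denom_gt0 t_gt1 IpI.
case/and4P: IpI => _ _ lt_Ip /forall_inP le_cn.
set c := s2_val n p I.
have le_pc : p - fsum n I <= (t - #|I| - 1) * c by apply: leq_mul_ceildiv.
have card_I : #|I| + #|~: I| = t by rewrite cardsC card_ord.
pose u i := if i \in I then n i else c.
have sum_uC : \sum_(i in ~: I) u i = #|~: I| * c.
  by rewrite -sum_nat_const; apply: eq_bigr => i; rewrite inE /u => /negPf ->.
have sum_u : \sum_i u i = fsum n I + #|~: I| * c.
  by rewrite (sum_setC I) sum_uC; congr (_ + _); apply: eq_bigr => i; rewrite /u => ->.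
have [|b [le_bu eq_bu sum_b]] :=
  @sum_decrease_on _ (~: I) u (fsum n I + #|~: I| * c - (p + c)).
  by rewrite sum_uC; lia.
have {}sum_b : \sum_i b i = p + c by move: sum_b; rewrite sum_u; clearbody c; nia.
exists b => //; split => i.
  by apply: leq_trans (le_bu i) _; rewrite /u; case: ifP => // /negbT /le_cn.
case: (boolP (i \in I)) => iI; first by rewrite eq_bu ?inE ?iI // /u iI ltnn.
by rewrite sum_b leq_add2l (leq_trans (le_bu i)) // /u (negPf iI).
Qed.

Lemma gamma_formula_le_fsum I : p <= fsum n I -> gamma_formula n p <= fsum n I.
Proof.
move=> le_pI; have le_s1 : s1 n p <= fsum n I by apply: (@bigmin_le_cond _ nat).
by rewrite /gamma_formula; case: ifP => _ //; apply: leq_trans (geq_minl _ _) le_s1.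
Qed.

Lemma gamma_formula_le_s2_val I :
  in_Ip n p I -> gamma_formula n p <= p + s2_val n p I.
Proof.
move=> IpI; have le_s2 : s2 n p <= s2_val n p I by apply: (@bigmin_le_cond _ nat).
rewrite /gamma_formula (introT existsP (ex_intro _ I IpI)).
by apply: leq_trans (geq_minr _ _) _; rewrite leq_add2l.
Qed.

Lemma leq_gamma_formula m : 1 < t -> p < fsum n setT ->
  (forall I, p <= fsum n I -> m <= fsum n I) ->
  (forall I, in_Ip n p I -> m <= p + s2_val n p I) ->
  m <= gamma_formula n p.
Proof.
move=> t_gt1 lt_pT le_mf le_ms2.
have le_ms1 : m <= s1 n p.
  by apply/(@bigmin_geP _ nat); split; [apply/le_mf/ltnW | exact: le_mf].
rewrite /gamma_formula; case: ifP => [/existsP [I0 IpI0] | _] //.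
rewrite leq_min le_ms1 -leq_subLR; apply/(@bigmin_geP _ nat); rewrite !leEnat; split.
  by rewrite leq_subLR (leq_trans (le_ms2 _ IpI0)) // leq_add2l s2_val_le.
by move=> I IpI; rewrite leq_subLR le_ms2.
Qed.

Lemma dom_profile_fill a j : dom_profile a -> fsum n (full_parts a) <= p ->
  j \notin full_parts a -> n j + p <= \sum_i a i ->
  exists2 b, dom_profile b &
    \sum_i b i = \sum_i a i /\ full_parts a \proper full_parts b.
Proof.
move=> [le_an dom_a] le_fp jN le_njs.
set F := full_parts a in le_fp jN *; set R := ~: (j |: F).
pose u i := if i == j then n j else a i.
have ne_Fj i : i \in F -> i != j by move=> iF; apply: contraNneq jN => <-.
have sum_u : \sum_i u i = \sum_i a i + (n j - a j).
  rewrite (bigD1 j) // [in RHS](bigD1 j) //= /u eqxx.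
  by rewrite (eq_bigr a) => [|i /negPf ->]; have := le_an j; lia.
have sum_a : \sum_i a i = fsum n F + a j + \sum_(i in R) a i.
  by rewrite (sum_setC (j |: F)) big_setU1 //= sum_full_parts // [a j + _]addnC.
have sum_uR : \sum_(i in R) u i = \sum_(i in R) a i.
  by apply: eq_bigr => i; rewrite !inE negb_or /u => /andP [/negPf ->].
have [|b [le_bu eq_bu sum_b]] := @sum_decrease_on _ R u (n j - a j).
  by rewrite sum_uR; move: le_njs le_fp; rewrite sum_a; lia.
have bF i : i \in F -> b i = a i.
  by move=> iF; rewrite eq_bu /u ?(negPf (ne_Fj i iF)) // setCK setU1r.
have bj : b j = n j by rewrite eq_bu /u ?eqxx // setCK setU11.
have le_ba i : i != j -> b i <= a i.
  by move=> /negPf ne_ij; apply: leq_trans (le_bu i) _; rewrite /u ne_ij.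
have {}sum_b : \sum_i b i = \sum_i a i by move: sum_b; rewrite sum_u; lia.
exists b; last split => //.
  split=> [i | i lt_bi].
    by case: (eqVneq i j) => [->|/le_ba le_bai]; rewrite ?bj // (leq_trans le_bai).
  have ne_ij : i != j by apply: contraTneq lt_bi => ->; rewrite bj ltnn.
  have lt_ai : a i < n i.
    by rewrite ltnNge; apply: contraTN lt_bi => le_nai; rewrite bF -?leqNgt // inE.
  by rewrite sum_b (leq_trans _ (dom_a i lt_ai)) // leq_add2l le_ba.
apply/properP; split; last by exists j => //; rewrite inE bj.
by apply/subsetP => i iF; rewrite inE bF //; rewrite inE in iF.
Qed.

Lemma dom_profile_in_Ip a :
  p < fsum n setT -> dom_profile a -> fsum n (full_parts a) < p ->
  (forall j, j \notin full_parts a -> \sum_i a i < n j + p) ->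
  in_Ip n p (full_parts a) /\ p + s2_val n p (full_parts a) <= \sum_i a i.
Proof.
move=> lt_pT [le_an dom_a] lt_Fp lt_s.
have sum_a := sum_setC (full_parts a) a; rewrite sum_full_parts // in sum_a.
set F := full_parts a in lt_Fp lt_s sum_a *.
set s := \sum_i a i in dom_a lt_s sum_a *.
have lt_a i : i \notin F -> a i < n i by rewrite inE -ltnNge.
have /properP [_ [j0 _ j0N]] : F \proper setT.
  by rewrite properT; apply: contraTneq lt_Fp => ->; rewrite -leqNgt ltnW.
have le_ps : p <= s by have := dom_a j0 (lt_a j0 j0N); lia.
set m := s - p.
have le_am i : i \notin F -> a i <= m by move=> iN; have := dom_a i (lt_a i iN); lia.
have k_gt0 : 0 < #|~: F| by apply/card_gt0P; exists j0; rewrite inE.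
have le_p : p <= fsum n F + (#|~: F| - 1) * m.
  have sum_N : \sum_(i in ~: F) a i <= #|~: F| * m.
    by rewrite -sum_nat_const; apply: leq_sum => i; rewrite inE => /le_am.
  have := leq_pmull m k_gt0; rewrite mulnBl mul1n; lia.
have /andP [k_gt1 _] : (0 < #|~: F| - 1) && (0 < m) by rewrite -muln_gt0; lia.
have card_F : #|F| + #|~: F| = t by rewrite cardsC card_ord.
have le_cm : s2_val n p F <= m.
  by rewrite /s2_val; apply: ceildiv_leq; rewrite ?subnBA; lia.
split; last by lia.
apply/and4P; split => //; first by rewrite properT; apply/eqP => FT; rewrite FT inE in j0N.
  lia.
by apply/forall_inP => i iN; apply: leq_trans le_cm _; have := lt_s i iN; lia.
Qed.

Lemma gamma_formula_le_dom_profile a :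
  p < fsum n setT -> dom_profile a -> gamma_formula n p <= \sum_i a i.
Proof.
move=> lt_pT; have [k] := ubnP #|~: full_parts a|; elim: k a => // k IHk a lt_k dom_a.
set F := full_parts a in lt_k *.
have [le_pF | lt_Fp] := leqP p (fsum n F).
  apply: leq_trans (gamma_formula_le_fsum le_pF) _.
  by rewrite (sum_setC F) sum_full_parts ?leq_addr //; case: dom_a.
have [/existsP [j /andP [jN le_njs]] | /existsPn lt_s] :=
  boolP [exists j, (j \notin F) && (n j + p <= \sum_i a i)].
  have [b dom_b [<- ltFb]] := dom_profile_fill dom_a (ltnW lt_Fp) jN le_njs.
  apply: IHk dom_b; rewrite -properC in ltFb.
  by apply: leq_trans (proper_card ltFb) _; rewrite -ltnS.
have [|IpF le_s] := dom_profile_in_Ip lt_pT dom_a lt_Fp.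
  by move=> j jN; move: (lt_s j); rewrite jN ltnNge.
exact: leq_trans (gamma_formula_le_s2_val IpF) le_s.
Qed.
End Profiles.

Lemma gamma_p_le (V : finType) (e : rel V) p S :
  p_dominating e p S -> gamma_p e p <= #|S|.
Proof. by apply: (@bigmin_le_cond _ nat). Qed.

Lemma leq_gamma_p (V : finType) (e : rel V) p m :
  (forall S, p_dominating e p S -> m <= #|S|) -> m <= gamma_p e p.
Proof.
move=> le_m; apply/(@bigmin_geP _ nat); split => //.
by rewrite -cardsT; apply: le_m; apply/forallP => v; rewrite in_setT.
Qed.

Section CompleteMultipartite.
Variables (t : nat) (V : finType) (part : V -> 'I_t).

Definition part_profile (S : {set V}) (i : 'I_t) : nat :=
  #|S :&: [set v | part v == i]|.

Lemma card_part_profile (S : {set V}) : #|S| = \sum_i part_profile S i.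
Proof.
rewrite -sum1_card (partition_big part xpredT) //=.
apply: eq_bigr => i _; rewrite /part_profile -sum1_card.
by apply: eq_bigl => v; rewrite !inE.
Qed.

Lemma card_cmp_nbhd (S : {set V}) v :
  #|[set u in S | cmp_adj part v u]| = #|S| - part_profile S (part v).
Proof.
by rewrite -cardsD; apply: eq_card => u; rewrite !inE /cmp_adj andbC eq_sym.
Qed.

Variable n : 'I_t -> nat.
Hypothesis card_part : forall i, #|[set v | part v == i]| = n i.

Lemma p_dominating_profile p (S : {set V}) :
  p_dominating (cmp_adj part) p S <-> dom_profile n p (part_profile S).
Proof.
have le_S i : part_profile S i <= #|S| by apply/subset_leq_card/subsetIl.
split.
- move/forallP => dom_S; split => [i | i lt_Si].
    by rewrite -card_part subset_leq_card // subsetIr.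
  have [v vi vS] : exists2 v, v \in [set v | part v == i] & v \notin S.
    apply/subsetPn; apply: contraTN lt_Si => sub.
    by rewrite /part_profile (setIidPr sub) card_part ltnn.
  move: (implyP (dom_S v) vS); rewrite card_cmp_nbhd leq_subRL // addnC.
  by rewrite -card_part_profile; move: vi; rewrite inE => /eqP ->.
- move=> [_ dom_a]; apply/forallP => v; apply/implyP => vS.
  have lt_v : part_profile S (part v) < n (part v).
    rewrite -card_part; apply/proper_card/properP; split; first exact: subsetIr.
    by exists v; rewrite !inE ?eqxx // (negPf vS).
  by rewrite card_cmp_nbhd leq_subRL // addnC card_part_profile dom_a.
Qed.

Lemma part_profile_surj a : (forall i, a i <= n i) -> exists S, part_profile S =1 a.
Proof.
move=> le_an.
have /fin_all_exists [A A_spec] : forall i, exists A : {set V},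
    A \subset [set v | part v == i] /\ #|A| = a i.
  move=> i; have [|A sAi cardA] := @exists_subset_card _ [set v | part v == i] (a i).
    by rewrite card_part.
  by exists A.
exists (\bigcup_i A i) => i; rewrite /part_profile.
suff -> : \bigcup_j A j :&: [set v | part v == i] = A i by case: (A_spec i).
apply/setP => v; rewrite inE; apply/andP/idP => [[/bigcupP [j _ vAj] vi] | vAi].
  have := subsetP (A_spec j).1 v vAj; rewrite !inE in vi *.
  by rewrite (eqP vi) => /eqP ->.
split; last exact: subsetP (A_spec i).1 v vAi.
by apply/bigcupP; exists i.
Qed.

Lemma gamma_p_le_dom_profile p a :
  dom_profile n p a -> gamma_p (cmp_adj part) p <= \sum_i a i.
Proof.
move=> [le_an dom_a]; have [S eq_Sa] := part_profile_surj le_an.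
have sum_S : \sum_i part_profile S i = \sum_i a i by apply: eq_bigr => i _.
rewrite -sum_S -card_part_profile; apply/gamma_p_le/p_dominating_profile.
by split => i; rewrite ?sum_S !eq_Sa; [exact: le_an | exact: dom_a].
Qed.
End CompleteMultipartite.

Theorem theorem9 (p t : nat) (n : 'I_t -> nat) (V : finType) (part : V -> 'I_t) :
  1 <= p -> 2 <= t ->
  (forall i, 0 < n i) ->
  (forall i, #|[set v | part v == i]| = n i) ->
  p < fsum n setT ->
  gamma_p (cmp_adj part) p = gamma_formula n p.
Proof.
move=> _ t_gt1 _ card_part lt_p_fsumT.
apply/eqP; rewrite eqn_leq; apply/andP; split.
  apply: leq_gamma_formula => // [I le_pI | I IpI].
    have [a dom_a <-] := dom_profile_fsum le_pI.
    exact: gamma_p_le_dom_profile card_part _ _ dom_a.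
  have [a dom_a <-] := dom_profile_s2_val t_gt1 IpI.
  exact: gamma_p_le_dom_profile card_part _ _ dom_a.
apply: leq_gamma_p => S /(p_dominating_profile card_part) dom_S.
by rewrite (card_part_profile part); apply: gamma_formula_le_dom_profile.
Qed.
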